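(* Let $p\ge1$ be an integer and consider the $p$-Pass algorithm run with arbitrary orderings of $V$ in each pass. For every $1\le i\le p$, if $|S_i|<k$ then $f(S_i)\ge\big(1-(\tfrac{p}{p+1})^i\big)\mathrm{OPT}$.
   Context: $V$ is a finite ground set with $|V|=n$; $f:2^V\to\mathbb{R}_{\ge0}$ is monotone, submodular and normalized; $f(e\mid Y)=f(Y\cup\{e\})-f(Y)$. $k\le n$ is a positive integer and $\mathrm{OPT}=\max\{f(S):S\subseteq V,|S|\le k\}$. $p$-Pass algorithm (knows $\mathrm{OPT}$): start with $S=\emptyset$; for $i=1,\dots,p$, make a pass over all elements of $V$ (in some order) and add each element $e$ to $S$ if $|S|<k$ and $f(e\mid S)\ge(\frac{p}{p+1})^i\cdot\frac{\mathrm{OPT}}{k}$; return $S$. $S_i$ denotes the set $S$ after the $i$-th pass ($S_0=\emptyset$) and $k_i=|S_i\setminus S_{i-1}|$. *)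

From HB Require Import structures.
From mathcomp Require Import all_boot all_order all_algebra.
Set Implicit Arguments. Unset Strict Implicit. Unset Printing Implicit Defensive.
Import Order.TTheory GRing.Theory Num.Theory.
Local Open Scope ring_scope.

Section Defs.
Variables (R : realFieldType) (V : finType).
Implicit Types (f : {set V} -> R).

Definition marg f (e : V) (Y : {set V}) : R := f (e |: Y) - f Y.

Definition nonneg_fun f := forall S, 0 <= f S.
Definition normalized f := f set0 = 0.
Definition monotone f := forall A B : {set V}, A \subset B -> f A <= f B.
Definition submodular f :=
  forall (A B : {set V}) (e : V), A \subset B -> e \notin B -> marg f e B <= marg f e A.

(* OPT = max { f S : |S| <= k } (the set0 candidate and f >= 0 make 0 a valid seed). *)
Definition OPT f (k : nat) : R :=
  \big[Num.max/0]_(S : {set V} | (#|S| <= k)%N) f S.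

Definition threshold f (k p i : nat) : R :=
  ((p%:R / (p.+1)%:R) ^+ i) * (OPT f k / k%:R).

Definition pass f (k : nat) (t : R) (s : seq V) (S : {set V}) : {set V} :=
  foldl (fun (T : {set V}) (e : V) => if ((#|T| < k)%N && (t <= marg f e T)) then e |: T else T) S s.

Fixpoint S_after f (k p : nat) (ord : nat -> seq V) (i : nat) : {set V} :=
  match i with
  | 0 => set0
  | i'.+1 => pass f k (threshold f k p i'.+1) (ord i'.+1) (S_after f k p ord i')
  end.

End Defs.

(* Only the last pass matters.  If S_i is below budget, pass i examined every
   element and rejected each one outside S_i against a subset of S_i, so by
   submodularity every marginal gain w.r.t. S_i is below the threshold
   t_i = (p/(p+1))^i OPT/k.  Monotonicity and submodularity then bound any O
   with |O| <= k by f(O) <= f(S_i) + k t_i = f(S_i) + (p/(p+1))^i OPT. *)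
From HB Require Import structures.
From mathcomp Require Import all_boot all_order all_algebra.
Set Implicit Arguments. Unset Strict Implicit. Unset Printing Implicit Defensive.
Import Order.TTheory GRing.Theory Num.Theory.
Local Open Scope ring_scope.

Section Submodular.
Variables (R : realFieldType) (V : finType) (f : {set V} -> R).

Lemma marg_in (e : V) (Y : {set V}) : e \in Y -> marg f e Y = 0.
Proof. by move=> eY; rewrite /marg (setUidPr _) ?subrr // sub1set. Qed.

Lemma submodular_union_le (A S : {set V}) : submodular f ->
  f (A :|: S) <= f S + \sum_(e in A) marg f e S.
Proof.
move=> fsub; rewrite -[in A :|: S](set_enum A) -big_enum.
elim: (enum A) (enum_uniq A) => [|e s IH] /=.
  by rewrite big_nil addr0 set_nil set0U.
case/andP=> es /IH {}IH; rewrite big_cons.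
set B := [set x in s] :|: S.
rewrite set_cons -setUA -/B.
have gain_e : marg f e B <= marg f e S.
  have [eS|eNS] := boolP (e \in S).
    by rewrite !marg_in // inE eS orbT.
  by apply: fsub; [exact: subsetUr | rewrite inE negb_or inE es].
rewrite -(subrK (f B) (f (e |: B))) addrCA.
exact: lerD gain_e IH.
Qed.

Lemma OPT_ge0 (k : nat) : nonneg_fun f -> 0 <= OPT f k.
Proof.
move=> fge0; apply: (big_ind (fun x => 0 <= x)) => // x y.
by rewrite le_max => ->.
Qed.

Lemma OPT_le_marg_bound (k : nat) (S : {set V}) (t : R) :
  nonneg_fun f -> monotone f -> submodular f -> 0 <= t ->
  (forall e, marg f e S <= t) -> OPT f k <= f S + k%:R * t.
Proof.
move=> fge0 fmono fsub t_ge0 gain_le.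
apply: (big_ind (fun x => x <= f S + k%:R * t)).
- by rewrite addr_ge0 ?mulr_ge0.
- by move=> x y ? ?; rewrite ge_max; apply/andP.
move=> O card_O; apply: le_trans (fmono O (O :|: S) (subsetUl _ _)) _.
apply: le_trans (submodular_union_le O S fsub) _; rewrite lerD2l.
apply: le_trans (ler_sum _ (fun e _ => gain_le e)) _.
by rewrite sumr_const -[t *+ _]mulr_natl; apply: ler_wpM2r; rewrite ?ler_nat.
Qed.

End Submodular.

Section Pass.
Variables (R : realFieldType) (V : finType) (f : {set V} -> R).
Variables (k : nat) (t : R).

Lemma sub_pass (s : seq V) (S : {set V}) : S \subset pass f k t s S.
Proof.
elim: s S => [|e s IH] S //=; apply: subset_trans (IH _).
by case: ifP => _ //; apply: subsetUr.
Qed.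

(* A rejected element failed the threshold against a subset of the final set,
   and submodularity only decreases its gain afterwards. *)
Lemma pass_marg_lt (s : seq V) (S : {set V}) : submodular f ->
  (#|pass f k t s S| < k)%N ->
  forall e, e \in s -> e \notin pass f k t s S -> marg f e (pass f k t s S) < t.
Proof.
move=> fsub; elim: s S => [|e s IH] S //= under_k x.
rewrite inE => /orP [/eqP -> | xs]; last exact: IH.
move: under_k; case: ifP => [_ _ | rejected under_k] eN.
  by case/negP: eN; apply: (subsetP (sub_pass s (e |: S))); rewrite setU11.
have S_sub := sub_pass s S.
move: rejected; rewrite (leq_ltn_trans (subset_leq_card S_sub) under_k) /=.
move/negbT; rewrite -ltNge; apply: le_lt_trans.
exact: fsub.
Qed.

Lemma pass_marg_le (s : seq V) (S : {set V}) : submodular f -> 0 <= t ->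
  (forall e, e \in s) -> (#|pass f k t s S| < k)%N ->
  forall e, marg f e (pass f k t s S) <= t.
Proof.
move=> fsub t_ge0 s_full under_k e.
have [eT|eNT] := boolP (e \in pass f k t s S); first by rewrite marg_in.
exact/ltW/pass_marg_lt.
Qed.

End Pass.

Theorem mainTheorem17 (R : realFieldType) (V : finType) (f : {set V} -> R)
  (k p : nat) (ord : nat -> seq V) :
  nonneg_fun f -> normalized f -> monotone f -> submodular f ->
  (0 < k)%N -> (k <= #|V|)%N -> (1 <= p)%N ->
  (forall i, perm_eq (ord i) (enum V)) ->
  forall i : nat, (1 <= i <= p)%N ->
  (#|S_after f k p ord i| < k)%N ->
  (1 - (p%:R / (p.+1)%:R) ^+ i) * OPT f k <= f (S_after f k p ord i).
Proof.
move=> fge0 _ fmono fsub k_gt0 _ _ ord_full [|i] // _ /= under_k.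
set q := (p%:R / (p.+1)%:R) ^+ i.+1.
have k_neq0 : k%:R != 0 :> R by rewrite pnatr_eq0 -lt0n.
have t_ge0 : 0 <= threshold f k p i.+1.
  by rewrite mulr_ge0 ?exprn_ge0 ?divr_ge0 ?OPT_ge0.
have k_threshold : k%:R * threshold f k p i.+1 = q * OPT f k.
  by rewrite /threshold -/q mulrCA [k%:R * _]mulrCA mulfV ?mulr1.
have ord_mem e : e \in ord i.+1 by rewrite (perm_mem (ord_full _)) mem_enum.
have := OPT_le_marg_bound k fge0 fmono fsub t_ge0
  (pass_marg_le fsub t_ge0 ord_mem under_k).
by rewrite k_threshold mulrBl mul1r lerBlDr.
Qed.
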